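(* Let $H$ be a separated labeled hypergraph and let $H'$ be a minor of $H$. If $\mathcal A[H']\neq k[H']$, then $\mathcal A[H]\neq k[H]$.
   Context: Let $k$ be a field and $S=k[x_1,\dots,x_n,y]$. For an integral convex polytope $\mathcal P\subseteq\mathbb R^n_{\ge 0}$, the Ehrhart ring $\mathcal A[\mathcal P]$ is the $k$-subspace of $S$ spanned by the monomials $x^{\mathbf a}y^t$ with $t\in\mathbb N$, $\mathbf a\in t\mathcal P\cap\mathbb Z^n$; the polytopal ring is $k[\mathcal P]=k[x^{\mathbf a}y:\mathbf a\in\mathcal P\cap\mathbb Z^n]$. A labeled hypergraph $H=(V,f)$ on a finite set $V$ with alphabet $\{x_1,\dots,x_n\}$ is a function $f:\{x_1,\dots,x_n\}\to\mathcal P(V)$; its edges are the nonempty sets in the image of $f$. $H$ is separated if for all distinct $v,w\in V$ there are edges $F,G$ with $v\in F\setminus G$, $w\in G\setminus F$. For separated $H$, let $x^{\mathbf a_v}=\prod_{x:\,v\in f(x)}x$ for $v\in V$, let $\mathcal P_H=\mathrm{conv}\{\mathbf a_v:v\in V\}$, and $\mathcal A[H]=\mathcal A[\mathcal P_H]$, $k[H]=k[\mathcal P_H]$. For $W\subseteq V$, the induced subhypergraph is $H|_W=(W,f_W)$ with $f_W(x)=f(x)\cap W$. The deletion of an edge $E$ from $H$ is $H\setminus E=H|_{V\setminus E}$. A minor of $H$ is a labeled hypergraph obtained from $H$ by a finite sequence of edge deletions. *)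

From HB Require Import structures.
From mathcomp Require Import all_boot all_order all_algebra.
Set Implicit Arguments. Unset Strict Implicit. Unset Printing Implicit Defensive.
Import Order.TTheory GRing.Theory Num.Theory.
Local Open Scope ring_scope.

(* Exponent of a monomial x^a y^t of S = k[x_1..x_n, y]. *)
Definition expo (n : nat) := ({ffun 'I_n -> nat} * nat)%type.

(* A labeled hypergraph with alphabet {x_1,...,x_n} on a vertex set is
   f : 'I_n -> {set V}; the induced subhypergraph on W : {set V} is
   H|_W = (W, fun i => f i :&: W).  We always work with such pairs (W, f);
   the hypergraph H itself is the case W = [set: V]. *)

(* x^{a_v} = prod_{x : v in f(x)} x, for the hypergraph (W, f|_W) *)
Definition avec (V : finType) (n : nat) (W : {set V}) (f : 'I_n -> {set V})
  (v : V) (i : 'I_n) : nat := (v \in f i :&: W).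

(* a lies in t * P_{H|_W} = t * conv{a_v : v in W}, a in Z^n (nonneg since
   P is in the nonneg orthant): a = sum_v lam_v a_v, lam >= 0, sum lam = t,
   with coefficients in the ordered field R. *)
Definition in_dilate (R : realFieldType) (V : finType) (n : nat)
  (W : {set V}) (f : 'I_n -> {set V}) (a : {ffun 'I_n -> nat}) (t : nat) : Prop :=
  exists lam : V -> R,
    [/\ forall v, 0 <= lam v,
        \sum_(v in W) lam v = t%:R
      & forall i, (a i)%:R = \sum_(v in W) lam v * (avec W f v i)%:R].

Definition ehrhart_mon (R : realFieldType) (V : finType) (n : nat)
  (W : {set V}) (f : 'I_n -> {set V}) (e : expo n) : Prop :=
  in_dilate R W f e.1 e.2.

Definition lattice_pt (R : realFieldType) (V : finType) (n : nat)
  (W : {set V}) (f : 'I_n -> {set V}) (a : {ffun 'I_n -> nat}) : Prop :=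
  in_dilate R W f a 1.

(* monomials of the polytopal ring k[H|_W] = k[x^a y : a in P cap Z^n]:
   products of t generators x^a y *)
Definition polytopal_mon (R : realFieldType) (V : finType) (n : nat)
  (W : {set V}) (f : 'I_n -> {set V}) (e : expo n) : Prop :=
  exists s : seq {ffun 'I_n -> nat},
    [/\ size s = e.2,
        forall x, x \in s -> lattice_pt R W f x
      & forall i, e.1 i = \sum_(x <- s) x i].

(* Elements of S (or of its completion) as coefficient functions. *)
Definition monomial (k : fieldType) (n : nat) (m : expo n) : expo n -> k :=
  fun e => (e == m)%:R.

Inductive kspan (k : fieldType) (n : nat) (M : expo n -> Prop) :
    (expo n -> k) -> Prop :=
| kspan0 : kspan M (fun _ => 0)
| kspan_mon m : M m -> kspan M (monomial k m)
| kspan_comb (c : k) p q : kspan M p -> kspan M q ->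
    kspan M (fun e => c * p e + q e)
| kspan_ext p q : (forall e, p e = q e) -> kspan M p -> kspan M q.

Definition ehrhart_ring (k : fieldType) (R : realFieldType) (V : finType)
  (n : nat) (W : {set V}) (f : 'I_n -> {set V}) : (expo n -> k) -> Prop :=
  kspan (ehrhart_mon R W f).

Definition polytopal_ring (k : fieldType) (R : realFieldType) (V : finType)
  (n : nat) (W : {set V}) (f : 'I_n -> {set V}) : (expo n -> k) -> Prop :=
  kspan (polytopal_mon R W f).

Definition subspace_neq (k : fieldType) (n : nat) (A B : (expo n -> k) -> Prop) :=
  exists p, ~ (A p <-> B p).

Definition separated (V : finType) (n : nat) (W : {set V}) (f : 'I_n -> {set V}) :=
  forall v w, v \in W -> w \in W -> v != w ->
    exists i j, [/\ v \in f i :&: W, v \notin f j :&: W,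
                    w \in f j :&: W & w \notin f i :&: W].

(* H|_W' is a minor of H|_W: finite sequence of edge deletions, where
   deleting the edge E = f i :&: W (nonempty) gives H|_(W :\: E). *)
Inductive is_minor (V : finType) (n : nat) (f : 'I_n -> {set V}) (W : {set V}) :
    {set V} -> Prop :=
| minor_refl : is_minor f W W
| minor_step W' i : is_minor f W W' -> f i :&: W' != set0 ->
    is_minor f W (W' :\: (f i :&: W')).

Arguments ehrhart_ring k R {V n} W f.
Arguments polytopal_ring k R {V n} W f.

From HB Require Import structures.
From mathcomp Require Import all_boot all_order all_algebra.
Set Implicit Arguments. Unset Strict Implicit. Unset Printing Implicit Defensive.
Import Order.TTheory GRing.Theory Num.Theory.

(* Deleting the edge E = f i :&: W from H|_W passes to the face {a_i = 0} of
   the polytope P_{H|_W}: a point a lies in t * P_{H|_(W :\: E)} exactly when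
   it lies in t * P_{H|_W} and a_i = 0.  Consequently both the Ehrhart ring
   and the polytopal ring of the minor are spanned by precisely those spanning
   monomials of the larger ring whose x_i-exponent vanishes.
   On the algebraic side, projecting onto the monomials satisfying a
   predicate P maps the span of a monomial set M onto the span of its
   P-part, and every element of that P-part span is supported on P; so if
   A[H|_W] and k[H|_W] agree at p then so do A[H'] and k[H'].  Hence a single
   edge deletion preserves the inequality A <> k[.], and the theorem follows by
   induction along the sequence of deletions.  (Separatedness of H is only
   needed to make P_H a lattice polytope with the a_v as vertices; the
   argument below does not use it.) *)

Local Open Scope ring_scope.

Section MonomialSpans.
Variables (k : fieldType) (n : nat).
Implicit Types (M N : expo n -> Prop) (P : pred (expo n)) (p : expo n -> k).

Lemma kspan_mono M N p : (forall e, M e -> N e) -> kspan M p -> kspan N p.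
Proof.
move=> MN; elim=> [|m Mm|c p1 q1 _ H1 _ H2|p1 q1 E _ H].
- exact: kspan0.
- exact/kspan_mon/MN.
- exact: kspan_comb.
- exact: kspan_ext E H.
Qed.

Lemma kspan_support M p : kspan M p -> forall e, p e != 0 -> M e.
Proof.
elim=> [|m Mm|c p1 q1 _ H1 _ H2|p1 q1 E _ H] e.
- by rewrite eqxx.
- by rewrite /monomial; have [->|] := eqVneq e m; rewrite ?eqxx.
- case: (p1 e =P 0) => [->|/eqP/H1//]; rewrite mulr0 add0r; exact: H2.
- by rewrite -E; apply: H.
Qed.

Lemma kspan_restrict M P p :
  kspan M p -> kspan (fun e => M e /\ P e) (fun e => if P e then p e else 0).
Proof.
elim=> [|m Mm|c p1 q1 _ H1 _ H2|p1 q1 E _ H].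
- by apply: (kspan_ext (p := fun _ => 0)) => [e|]; [case: (P e) | exact: kspan0].
- case Pm: (P m).
  + apply: (kspan_ext (p := monomial k m)); last exact: kspan_mon.
    by move=> e; rewrite /monomial; have [->|] := eqVneq e m; rewrite ?Pm //; case: (P e).
  + apply: (kspan_ext (p := fun _ => 0)); last exact: kspan0.
    by move=> e; rewrite /monomial; have [->|] := eqVneq e m; rewrite ?Pm //; case: (P e).
- by apply: kspan_ext (kspan_comb c H1 H2) => e; case: (P e); rewrite ?mulr0 ?addr0.
- by apply: kspan_ext H => e; rewrite E.
Qed.

Section Face.
Variables (P : pred (expo n)) (M M' N N' : expo n -> Prop).
Hypothesis (faceM : forall e, M' e <-> M e /\ P e).
Hypothesis (faceN : forall e, N' e <-> N e /\ P e).

Lemma kspan_face_incl p : (kspan M p -> kspan N p) -> kspan M' p -> kspan N' p.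
Proof.
move=> MN spM'.
have spN : kspan N p by apply/MN/(kspan_mono _ spM') => e /faceM[].
apply: kspan_ext (kspan_mono _ (kspan_restrict P spN)) => [e|e /faceN //].
case Pe: (P e) => //; case: (p e =P 0) => // /eqP /(kspan_support spM') /faceM.
by rewrite Pe => -[].
Qed.

End Face.

Lemma kspan_face_iff P M M' N N' p :
  (forall e, M' e <-> M e /\ P e) -> (forall e, N' e <-> N e /\ P e) ->
  (kspan M p <-> kspan N p) -> (kspan M' p <-> kspan N' p).
Proof.
move=> fM fN [MN NM].
by split; [exact: (kspan_face_incl fM fN) | exact: (kspan_face_incl fN fM)].
Qed.

End MonomialSpans.

Section EdgeDeletion.
Variables (R : realFieldType) (V : finType) (n : nat) (f : 'I_n -> {set V}).

Lemma sum_vanishing_off (W W' : {set V}) (F : V -> R) :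
  W' \subset W -> (forall v, v \in W -> v \notin W' -> F v = 0) ->
  \sum_(v in W) F v = \sum_(v in W') F v.
Proof.
move=> sW F0; rewrite (bigID (mem W')) /= [X in _ + X]big1 ?addr0.
  by apply: eq_bigl => v; rewrite andb_idl // => /(subsetP sW).
by move=> v /andP[]; apply: F0.
Qed.

Lemma avec_sub (W W' : {set V}) v i :
  W' \subset W -> v \in W' -> avec W' f v i = avec W f v i.
Proof. by move=> sW vW; rewrite /avec !inE vW (subsetP sW _ vW). Qed.

(* Polytopes of induced subhypergraphs are contained in each other: extend
   the convex coefficients by zero. *)
Lemma in_dilate_sub (W W' : {set V}) a t :
  W' \subset W -> in_dilate R W' f a t -> in_dilate R W f a t.
Proof.
move=> sW [lam [lam_ge0 lam_sum lam_a]].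
exists (fun v => if v \in W' then lam v else 0); split.
- by move=> v; case: ifP.
- rewrite (sum_vanishing_off sW) => [|v _ /negbTE -> //].
  by rewrite -lam_sum; apply: eq_bigr => v ->.
- move=> j; rewrite (sum_vanishing_off sW) => [|v _ /negbTE ->]; last by rewrite mul0r.
  by rewrite lam_a; apply: eq_bigr => v vW; rewrite vW (avec_sub _ sW vW).
Qed.

(* The face {a_i = 0} of t * P_{H|_W} is t * P of the deletion of f i :&: W:
   a nonnegative combination with zero i-th coordinate puts no weight on the
   vertices in f i, and the remaining vertices have zero i-th coordinate. *)
Lemma in_dilate_delete (W : {set V}) i a t :
  in_dilate R (W :\: (f i :&: W)) f a t <-> in_dilate R W f a t /\ a i = 0%N.
Proof.
have sW : W :\: (f i :&: W) \subset W by apply: subsetDl.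
split.
- move=> dil; split; first exact: in_dilate_sub dil.
  case: dil => lam [_ _ lam_a]; apply/eqP; rewrite -(pnatr_eq0 R) lam_a.
  apply/eqP/big1 => v; rewrite /avec !inE => /andP[+ vW].
  by rewrite vW andbT => /negbTE ->; rewrite mulr0.
- case=> -[lam [lam_ge0 lam_sum lam_a]] ai.
  have lam0 v : v \in W -> v \notin W :\: (f i :&: W) -> lam v = 0.
    move=> vW; rewrite !inE vW /= !andbT => /negPn vf.
    have sum0 : \sum_(u in W) lam u * (avec W f u i)%:R = 0 by rewrite -lam_a ai.
    have := psumr_eq0P _ sum0 vW; rewrite /avec !inE vf vW mulr1; apply.
    by move=> u _; rewrite mulr_ge0.
  exists lam; split => //; first by rewrite -lam_sum (sum_vanishing_off sW).
  move=> j; rewrite lam_a (sum_vanishing_off sW) => [|v vW /(lam0 v vW) ->];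
    last by rewrite mul0r.
  by apply: eq_bigr => v vW; rewrite (avec_sub _ sW vW).
Qed.

Lemma ehrhart_mon_delete (W : {set V}) i (e : expo n) :
  ehrhart_mon R (W :\: (f i :&: W)) f e <->
  ehrhart_mon R W f e /\ e.1 i == 0%N.
Proof.
by split=> [/in_dilate_delete [? ->] | [? /eqP ?]]; last apply/in_dilate_delete.
Qed.

(* Polytopal monomials of the deletion: those of H|_W with x_i-exponent 0,
   since a sum of lattice points has vanishing i-th coordinate iff each does. *)
Lemma polytopal_mon_delete (W : {set V}) i (e : expo n) :
  polytopal_mon R (W :\: (f i :&: W)) f e <->
  polytopal_mon R W f e /\ e.1 i == 0%N.
Proof.
split.
- case=> s [size_s s_pt s_sum].
  have s_face x : x \in s -> lattice_pt R W f x /\ x i = 0%N.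
    by move=> /s_pt /in_dilate_delete.
  split; first by exists s; split=> // x /s_face[].
  by rewrite s_sum sum_nat_seq_eq0; apply/allP => x /s_face[_ ->].
- case=> -[s [size_s s_pt s_sum]]; rewrite s_sum sum_nat_seq_eq0 => /allP s0.
  exists s; split=> // x xs; apply/in_dilate_delete; split; first exact: s_pt.
  exact/eqP/(s0 x xs).
Qed.

End EdgeDeletion.

Lemma subspace_neq_delete (k : fieldType) (R : realFieldType) (V : finType)
    (n : nat) (f : 'I_n -> {set V}) (W : {set V}) (i : 'I_n) :
  subspace_neq (ehrhart_ring k R (W :\: (f i :&: W)) f)
               (polytopal_ring k R (W :\: (f i :&: W)) f) ->
  subspace_neq (ehrhart_ring k R W f) (polytopal_ring k R W f).
Proof.
case=> p neq; exists p => eq_W; apply: neq.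
exact: (kspan_face_iff (P := fun e : expo n => e.1 i == 0%N)
          (@ehrhart_mon_delete R V n f W i) (@polytopal_mon_delete R V n f W i)).
Qed.

Theorem theorem3p9 (k : fieldType) (R : realFieldType) (V : finType) (n : nat)
  (f : 'I_n -> {set V}) (W : {set V}) :
  separated [set: V] f ->
  is_minor f [set: V] W ->
  subspace_neq (ehrhart_ring k R W f) (polytopal_ring k R W f) ->
  subspace_neq (ehrhart_ring k R [set: V] f) (polytopal_ring k R [set: V] f).
Proof.
move=> _; elim=> [//|W' i _ IH _ neq_minor].
exact/IH/(subspace_neq_delete neq_minor).
Qed.
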